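(* Let $\mathbb{K}$ be a perfect field, $I\subset\mathbb{K}[X_1,\dots,X_n]$ a zero-dimensional ideal, $Q=\mathbb{K}[X_1,\dots,X_n]/I$, and $P_{\min}\in\mathbb{K}[X_n]$ the minimal polynomial of $X_n$ in $Q$, factored as $P_{\min}=P_1^{e_1}\cdots P_K^{e_K}$ with the $P_k$ pairwise distinct irreducible polynomials and $e_k\ge1$. For $k\in\{1,\dots,K\}$ let $J_k=I+\langle P_k^{e_k}\rangle$, $Q_k=\mathbb{K}[X_1,\dots,X_n]/J_k$, $T_k=P_{\min}/P_k^{e_k}$, and define $\varphi_k:Q^*\to Q_k^*$ by $\varphi_k(\ell)(f)=\ell(T_k\hat f\bmod I)$, where $\hat f$ is any lift of $f\in Q_k$ to $\mathbb{K}[X_1,\dots,X_n]$. Then $\varphi_k$ is well defined, $\mathbb{K}$-linear and onto.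
   Context: $Q^*=\mathrm{Hom}_{\mathbb{K}}(Q,\mathbb{K})$ and $Q_k^*=\mathrm{Hom}_{\mathbb{K}}(Q_k,\mathbb{K})$. *)

From HB Require Import structures.
From mathcomp Require Import all_boot all_algebra.
From mathcomp Require Export mpoly.
Set Implicit Arguments. Unset Strict Implicit. Unset Printing Implicit Defensive.
Import GRing.Theory.
Local Open Scope ring_scope.

(* A perfect field: characteristic 0, or characteristic p with surjective Frobenius. *)
Definition perfect_field (K : fieldType) : Prop :=
  forall p : nat, p \in [pchar K] -> forall x : K, exists y : K, y ^+ p = x.

Definition is_ideal (K : fieldType) (n : nat) (I : {mpoly K[n]} -> Prop) : Prop :=
  [/\ I 0,
      forall p q, I p -> I q -> I (p + q)
    & forall r p, I p -> I (r * p)].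

(* Zero-dimensional: the quotient K[X]/I is finite dimensional over K, i.e.
   finitely many polynomials span K[X] modulo I. *)
Definition zero_dimensional (K : fieldType) (n : nat) (I : {mpoly K[n]} -> Prop) : Prop :=
  exists s : seq {mpoly K[n]}, forall p : {mpoly K[n]},
    exists c : nat -> K, I (p - \sum_(i < size s) c i *: s`_i).

Definition poly_in_var (K : fieldType) (n : nat) (j : 'I_n) (q : {poly K}) : {mpoly K[n]} :=
  (map_poly (fun c : K => c%:MP) q).['X_j].

Definition is_minpoly_var (K : fieldType) (n : nat) (I : {mpoly K[n]} -> Prop)
    (j : 'I_n) (P : {poly K}) : Prop :=
  [/\ P \is monic, I (poly_in_var j P)
    & forall q : {poly K}, q != 0 -> I (poly_in_var j q) -> (size P <= size q)%N].

Definition ideal_add_princ (K : fieldType) (n : nat) (I : {mpoly K[n]} -> Prop)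
    (g : {mpoly K[n]}) : {mpoly K[n]} -> Prop :=
  fun p => exists a b, I a /\ p = a + b * g.

(* Elements of Hom_K(K[X]/I, K), represented (via the universal property of the
   quotient) as K-linear maps K[X] -> K vanishing on I. *)
Definition in_dual (K : fieldType) (n : nat) (I : {mpoly K[n]} -> Prop)
    (l : {mpoly K[n]} -> K) : Prop :=
  (forall (a : K) (p q : {mpoly K[n]}), l (a *: p + q) = a * l p + l q)
  /\ (forall p, I p -> l p = 0).

Definition phi_map (K : fieldType) (n : nat) (T : {mpoly K[n]})
    (l : {mpoly K[n]} -> K) : {mpoly K[n]} -> K :=
  fun f => l (T * f).

From HB Require Import structures.
From mathcomp Require Import all_boot all_algebra.
From mathcomp Require Import mpoly.
Set Implicit Arguments. Unset Strict Implicit. Unset Printing Implicit Defensive.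
Import GRing.Theory.
Local Open Scope ring_scope.

(* Write G = P_k^e_k and T = P_min / G, so that T * G = P_min lies in I. The
   factors of T are irreducibles distinct from P_k, hence T and G are coprime
   and there are u, v with u T + v G = 1. Multiplication by T maps J_k into I,
   which makes phi_k well defined; conversely, a form psi on Q_k is the image
   of l := psi(u _), because u T f and f differ by the element v f G of J_k. *)

Section PolyInVar.
Variables (K : fieldType) (n : nat) (j : 'I_n).

Lemma poly_in_varD (p q : {poly K}) :
  poly_in_var j (p + q) = poly_in_var j p + poly_in_var j q.
Proof. by rewrite /poly_in_var rmorphD hornerD. Qed.

Lemma poly_in_varM (p q : {poly K}) :
  poly_in_var j (p * q) = poly_in_var j p * poly_in_var j q.
Proof. by rewrite /poly_in_var rmorphM hornerM. Qed.

Lemma poly_in_var1 : poly_in_var j (1 : {poly K}) = 1.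
Proof. by rewrite /poly_in_var map_polyC /= hornerC. Qed.

Lemma poly_in_var_Bezout (p q : {poly K}) : coprimep p q ->
  exists u v : {mpoly K[n]}, u * poly_in_var j p + v * poly_in_var j q = 1.
Proof.
case/Bezout_eq1_coprimepP=> [[u v] /= uv].
exists (poly_in_var j u), (poly_in_var j v).
by rewrite -!poly_in_varM -poly_in_varD uv poly_in_var1.
Qed.

End PolyInVar.

Lemma coprimep_monic_irreducible (K : fieldType) (p q : {poly K}) :
  irreducible_poly p -> irreducible_poly q -> p \is monic -> q \is monic ->
  p != q -> coprimep p q.
Proof.
move=> irr_p irr_q mon_p mon_q neq_pq; rewrite coprimep_def.
apply: contraR neq_pq => gcd_nonunit.
have gcd_p := irr_p _ gcd_nonunit (dvdp_gcdl p q).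
have gcd_q := irr_q _ gcd_nonunit (dvdp_gcdr p q).
by rewrite -eqp_monic // -(eqp_ltrans gcd_p) gcd_q.
Qed.

Lemma coprimep_prod_exp (K : fieldType) (I : finType) (P : I -> {poly K})
    (e : I -> nat) (k : I) (m : nat) :
  (forall i, i != k -> coprimep (P i) (P k)) ->
  coprimep (\prod_(i | i != k) P i ^+ e i) (P k ^+ m).
Proof.
move=> cop; apply: (big_ind (fun x => coprimep x (P k ^+ m))).
- exact: coprime1p.
- by move=> x y cop_x cop_y; rewrite coprimepMl cop_x cop_y.
- by move=> i neq_ik; apply/coprimep_expl/coprimep_expr/cop.
Qed.

Section IdealsAndDuals.
Variables (K : fieldType) (n : nat).
Implicit Types (I J : {mpoly K[n]} -> Prop) (l : {mpoly K[n]} -> K).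

Lemma in_dual_phi_map I J (t : {mpoly K[n]}) l :
  (forall p, I p -> J (t * p)) -> in_dual J l -> in_dual I (phi_map t l).
Proof.
move=> tIJ [lin lJ]; split=> [a p q|p Ip]; last exact/lJ/tIJ.
by rewrite /phi_map mulrDr -scalerAr lin.
Qed.

Lemma in_dual_congr J l p q : in_dual J l -> J (p - q) -> l p = l q.
Proof.
move=> [lin lJ] Jpq; rewrite -[p](subrK q) -[p - q]scale1r lin.
by rewrite lJ // mulr0 add0r.
Qed.

Lemma ideal_add_princ_sub I (g p : {mpoly K[n]}) :
  I p -> ideal_add_princ I g p.
Proof. by move=> Ip; exists p, 0; rewrite mul0r addr0. Qed.

Lemma ideal_add_princ_mull I (g b : {mpoly K[n]}) :
  I 0 -> ideal_add_princ I g (b * g).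
Proof. by move=> I0; exists 0, b; rewrite add0r. Qed.

Lemma ideal_add_princ_mul_annihilator I (g t p : {mpoly K[n]}) :
  is_ideal I -> I (t * g) -> ideal_add_princ I g p -> I (t * p).
Proof.
move=> [_ ID IM] Itg [a [b [Ia ->]]].
by rewrite mulrDr mulrCA; apply: ID; apply: IM.
Qed.

End IdealsAndDuals.

Theorem lemma8 (K : fieldType) (n : nat) (I : {mpoly K[n.+1]} -> Prop)
    (Pmin : {poly K}) (r : nat) (P : 'I_r -> {poly K}) (e : 'I_r -> nat)
    (k : 'I_r) :
  perfect_field K ->
  is_ideal I ->
  zero_dimensional I ->
  is_minpoly_var I ord_max Pmin ->
  (forall i, irreducible_poly (P i)) ->
  (forall i, P i \is monic) ->
  (forall i j, i != j -> P i != P j) ->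
  (forall i, (0 < e i)%N) ->
  Pmin = \prod_(i < r) P i ^+ e i ->
  let Jk := ideal_add_princ I (poly_in_var ord_max (P k ^+ e k)) in
  let Tk := poly_in_var ord_max (Pmin %/ P k ^+ e k) in
  (* well defined: phi_k maps Q^* into Q_k^* *)
  (forall l, in_dual I l -> in_dual Jk (phi_map Tk l))
  (* K-linear *)
  /\ (forall (a : K) (l1 l2 : {mpoly K[n.+1]} -> K) (f : {mpoly K[n.+1]}),
        phi_map Tk (fun p => a * l1 p + l2 p) f = a * phi_map Tk l1 f + phi_map Tk l2 f)
  (* onto *)
  /\ (forall psi, in_dual Jk psi ->
        exists l, in_dual I l /\ forall f, phi_map Tk l f = psi f).
Proof.
move=> _ I_ideal _ [_ I_Pmin _] P_irr P_monic P_neq _ Pmin_prod Jk Tk.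
set G := P k ^+ e k; set T := \prod_(i < r | i != k) P i ^+ e i.
have Pmin_TG : Pmin = T * G by rewrite Pmin_prod (bigD1 k) //= mulrC.
have Tk_T : Tk = poly_in_var ord_max T.
  by rewrite /Tk Pmin_TG mulpK // monic_neq0 // monic_exp.
have I_TkG : I (Tk * poly_in_var ord_max G).
  by rewrite Tk_T -poly_in_varM -Pmin_TG.
have [u [v uv]] : exists u v, u * Tk + v * poly_in_var ord_max G = 1.
  rewrite Tk_T; apply/poly_in_var_Bezout/coprimep_prod_exp => i neq_ik.
  by apply: coprimep_monic_irreducible; rewrite ?P_neq.
have [I0 _ IM] := I_ideal.
split.
  move=> l; apply: in_dual_phi_map => p.
  exact: ideal_add_princ_mul_annihilator.
split=> // psi psi_dual; exists (phi_map u psi); split.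
  by apply: in_dual_phi_map psi_dual => p Ip; apply/ideal_add_princ_sub/IM.
move=> f; rewrite /phi_map; apply: (in_dual_congr psi_dual).
have -> : u * (Tk * f) - f = - (v * f) * poly_in_var ord_max G.
  by rewrite -[f in _ - f]mul1r -uv mulrDl opprD addrA mulrA subrr add0r mulNr mulrAC.
exact: ideal_add_princ_mull.
Qed.
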